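(* For every integer $k\ge 1$, there is a protocol solving MEQ-AD$(3,2^k)$ in which every transmitted symbol is a single bit and the total number of transmitted bits is $3\lceil \lceil k\log_6 2\rceil \log_2 3\rceil$; this number is less than $1.840k+7.755$.
   Context: There are $n$ nodes labeled $1,\dots,n$ (here $n=3$); node $i$ privately holds an input $x_i\in\{1,\dots,M\}$ (here $M=2^k$). Communication is over private point-to-point links of a fully connected synchronous network. A deterministic protocol $P$ is a fixed finite schedule of steps $l=1,\dots,L(P)$; in step $l$ a prescribed node $T_l$ sends to a prescribed node $R_l\neq T_l$ one symbol $f_l(x_{T_l},T_l^+(l))$, where $T_l^+(l)$ is the sequence of symbols $T_l$ has received in steps $1,\dots,l-1$; only $R_l$ receives it. At the end each node $i$ outputs a bit $EQ_i$ depending on $x_i$ and the symbols it received. $P$ solves MEQ-AD$(n,M)$ if for every input, $EQ_1=\cdots=EQ_n=0$ iff $x_1=\cdots=x_n$. *)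

From Stdlib Require Import Reals ZArith.
From mathcomp Require Import all_boot.

Set Implicit Arguments.
Unset Strict Implicit.
Unset Printing Implicit Defensive.

(* Nodes 1,2,3 are represented by the ordinals 0,1,2 of 'I_3. *)
Definition node := 'I_3.

(* One step of a deterministic protocol with single-bit symbols:
   sender T_l, receiver R_l, and the symbol function
   f_l(x_{T_l}, T_l^+(l)), where T_l^+(l) is the sequence of symbols
   received by T_l in steps 1..l-1 (in order). *)
Record step := Step {
  sender   : node;
  receiver : node;
  symb     : nat -> seq bool -> bool
}.

(* A protocol: a finite schedule of steps plus the output functions
   EQ_i(x_i, received symbols).  EQ_i = 0 is encoded as [false]. *)
Record protocol := Protocol {
  steps  : seq step;
  output : node -> nat -> seq bool -> bool
}.

Definition plen (P : protocol) : nat := size (steps P).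

Definition wf_protocol (P : protocol) : Prop :=
  all (fun s => sender s != receiver s) (steps P).

Fixpoint run (s : seq step) (x : node -> nat) (recv : node -> seq bool)
  : node -> seq bool :=
  match s with
  | [::] => recv
  | st :: s' =>
      let b := symb st (x (sender st)) (recv (sender st)) in
      run s' x (fun i => if i == receiver st then rcons (recv i) b else recv i)
  end.

Definition received (P : protocol) (x : node -> nat) : node -> seq bool :=
  run (steps P) x (fun _ => [::]).

Definition EQ (P : protocol) (x : node -> nat) (i : node) : bool :=
  output P i (x i) (received P x i).

Definition solves_MEQ_AD3 (M : nat) (P : protocol) : Prop :=
  forall x : node -> nat,
    (forall i, 1 <= x i <= M) ->
    ((forall i, EQ P x i = false) <->
     (forall i j, x i = x j)).

(* Real ceiling: Rceil r = smallest integer >= r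
   (up r is the unique integer z with r < z <= r + 1). *)
Definition Rceil (r : R) : Z := Z.opp (Z.sub (up (Ropp r)) 1).

Definition Rlogb (b a : R) : R := Rdiv (ln a) (ln b).

Definition bitcount (k : nat) : nat :=
  3 * Z.to_nat (Rceil (Rmult (IZR (Rceil (Rmult (INR k) (Rlogb 6 2)))) (Rlogb 2 3))).

(* Node i maps its input to a word c_i(x_i) and sends it to node i+1, which
   raises an alarm unless the word equals c_i of its own input.  Everyone is
   silent iff c_0 x_0 = c_0 x_1, c_1 x_1 = c_1 x_2 and c_2 x_2 = c_2 x_0, so
   the protocol is correct as soon as these three equations force
   x_0 = x_1 = x_2.  Writing x - 1 in base 6 and mapping every digit d to
   the d-th permutation s_d of {0,1,2}, node i sends the base-3 word of the
   digits s_d(i): three permutations of {0,1,2} that agree cyclically in this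
   way are equal.  With m = ceil(k log_6 2) base-6 digits the base-3 words
   fit into L = ceil(m log_2 3) bits, and 3L < 3(k log_6 3 + log_2 3 + 1). *)

From Stdlib Require Import Reals ZArith Lra.
From mathcomp Require Import all_boot zify.

Set Implicit Arguments.
Unset Strict Implicit.
Unset Printing Implicit Defensive.

Definition cycle_injective (A : Type) (P : pred nat) (f : nat -> nat -> A) :=
  forall y0 y1 y2, P y0 -> P y1 -> P y2 ->
    f 0 y0 = f 0 y1 -> f 1 y1 = f 1 y2 -> f 2 y2 = f 2 y0 ->
    y0 = y1 /\ y1 = y2.

Definition perm3_table : seq (seq nat) :=
  [:: [:: 0; 1; 2]; [:: 0; 2; 1]; [:: 1; 0; 2];
      [:: 1; 2; 0]; [:: 2; 0; 1]; [:: 2; 1; 0]].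

Definition perm3 (j d : nat) : nat := nth 0 (nth [::] perm3_table d) j.

Lemma perm3_lt j d : perm3 j d < 3.
Proof.
by rewrite /perm3; case: d => [|[|[|[|[|[|d]]]]]]; case: j => [|[|[|j]]];
  rewrite /= ?nth_nil.
Qed.

Lemma perm3_cycle_injective : cycle_injective (gtn 6) perm3.
Proof.
have table : all (fun d0 => all (fun d1 => all (fun d2 =>
    [&& perm3 0 d0 == perm3 0 d1, perm3 1 d1 == perm3 1 d2
      & perm3 2 d2 == perm3 2 d0] ==> (d0 == d1) && (d1 == d2))
    (iota 0 6)) (iota 0 6)) (iota 0 6) by vm_compute.
move=> d0 d1 d2 lt0 lt1 lt2 e0 e1 e2.
have mem_d (d : nat) : d < 6 -> d \in iota 0 6 by rewrite mem_iota.
move/allP: table => /(_ _ (mem_d _ lt0)) /allP /(_ _ (mem_d _ lt1)).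
move=> /allP /(_ _ (mem_d _ lt2)).
by rewrite e0 e1 e2 !eqxx => /andP[/eqP -> /eqP ->].
Qed.

Lemma base_digit_split q a b x y :
  a < q -> b < q -> a + q * x = b + q * y -> a = b /\ x = y.
Proof.
move=> ltaq ltbq e.
have eq_ab : a = b.
  rewrite -(modn_small ltaq) -(modn_small ltbq) -(modnMDl x a) -(modnMDl y b).
  by rewrite ![_ * q]mulnC ![_ + a]addnC ![_ + b]addnC e.
split=> //; move: e; rewrite eq_ab => /addnI /eqP.
by rewrite eqn_mul2l; case: q ltbq {ltaq} => // q _ /eqP.
Qed.

Section Recoding.

Variables (p q : nat) (digit : nat -> nat -> nat).
Hypothesis p_gt0 : 0 < p.
Hypothesis digit_lt : forall j d, digit j d < q.
Hypothesis digit_cycle_injective : cycle_injective (gtn p) digit.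

Fixpoint recode (j m n : nat) : nat :=
  if m is m'.+1 then digit j (n %% p) + q * recode j m' (n %/ p) else 0.

Lemma recode_lt j m n : recode j m n < q ^ m.
Proof.
elim: m n => [|m IHm] n //=.
by have := digit_lt j (n %% p); have := IHm (n %/ p); rewrite expnS; nia.
Qed.

Lemma recode_cycle_injective m : cycle_injective (gtn (p ^ m)) (recode^~ m).
Proof.
elim: m => [|m IHm] n0 n1 n2; first by rewrite expn0 /=; lia.
rewrite expnS /= => lt0 lt1 lt2 e0 e1 e2.
have [d0 r0] := base_digit_split (digit_lt _ _) (digit_lt _ _) e0.
have [d1 r1] := base_digit_split (digit_lt _ _) (digit_lt _ _) e1.
have [d2 r2] := base_digit_split (digit_lt _ _) (digit_lt _ _) e2.
have [qe0 qe1] : n0 %/ p = n1 %/ p /\ n1 %/ p = n2 %/ p.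
  by apply: IHm; rewrite //= ltn_divLR // mulnC.
have [re0 re1] : n0 %% p = n1 %% p /\ n1 %% p = n2 %% p.
  by apply: digit_cycle_injective; rewrite //= ltn_pmod.
by rewrite (divn_eq n0 p) (divn_eq n1 p) (divn_eq n2 p); lia.
Qed.

End Recoding.

Fixpoint bits (L v : nat) : seq bool :=
  if L is L'.+1 then odd v :: bits L' v./2 else [::].

Lemma size_bits L v : size (bits L v) = L.
Proof. by elim: L v => [|L IHL] v //=; rewrite IHL. Qed.

Lemma bits_inj L v w : v < 2 ^ L -> w < 2 ^ L -> bits L v = bits L w -> v = w.
Proof.
elim: L v w => [|L IHL] v w; first by rewrite expn0; lia.
rewrite expnS /= => ltv ltw [eq_odd eq_half].
have -> : v = odd v + v./2.*2 by rewrite odd_double_half.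
rewrite (IHL v./2 w./2) ?eq_odd ?odd_double_half //; lia.
Qed.

Lemma run_cat s1 s2 x recv : run (s1 ++ s2) x recv = run s2 x (run s1 x recv).
Proof. by elim: s1 recv => [|st s1 IHs] recv //=. Qed.

Definition send_word (L : nat) (c : nat -> seq bool) (a b : node) : seq step :=
  map (fun l => Step a b (fun y _ => nth false (c y) l)) (iota 0 L).

Lemma run_send_word L c a b x recv i : (forall y, size (c y) = L) ->
  run (send_word L c a b) x recv i = if i == b then recv i ++ c (x a) else recv i.
Proof.
move=> size_c; rewrite -[c (x a)](mkseq_nth false) size_c /mkseq /send_word.
elim: (iota 0 L) recv => [|l s IHs] recv /=; first by rewrite cats0 if_same.
by rewrite IHs; case: (i == b); rewrite ?cat_rcons.
Qed.

Definition n0 : node := @Ordinal 3 0 isT.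
Definition n1 : node := @Ordinal 3 1 isT.
Definition n2 : node := @Ordinal 3 2 isT.

Lemma node_cases (i : node) : [\/ i = n0, i = n1 | i = n2].
Proof.
case: i => [[|[|[|i]]] lti] //;
  [constructor 1 | constructor 2 | constructor 3]; exact: val_inj.
Qed.

Definition ring_protocol (L : nat) (c : nat -> nat -> seq bool) : protocol :=
  Protocol (send_word L (c 0) n0 n1 ++ send_word L (c 1) n1 n2
              ++ send_word L (c 2) n2 n0)
           (fun i y r => r != c ((i + 2) %% 3) y).

Section RingProtocol.

Variables (L : nat) (c : nat -> nat -> seq bool).
Hypothesis size_c : forall j y, size (c j y) = L.

Lemma wf_ring_protocol : wf_protocol (ring_protocol L c).
Proof.
by rewrite /wf_protocol !all_cat !all_map; apply/and3P; split; apply/allP.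
Qed.

Lemma plen_ring_protocol : plen (ring_protocol L c) = 3 * L.
Proof. by rewrite /plen /= !size_cat !size_map size_iota; lia. Qed.

Lemma EQ_ring_protocol x :
  [/\ EQ (ring_protocol L c) x n1 = (c 0 (x n0) != c 0 (x n1)),
      EQ (ring_protocol L c) x n2 = (c 1 (x n1) != c 1 (x n2))
    & EQ (ring_protocol L c) x n0 = (c 2 (x n2) != c 2 (x n0))].
Proof. by rewrite /EQ /received /= !run_cat !run_send_word. Qed.

Lemma solves_ring_protocol M :
  cycle_injective [pred y | 0 < y <= M] c -> solves_MEQ_AD3 M (ring_protocol L c).
Proof.
move=> c_inj x x_range; have [EQ1 EQ2 EQ0] := EQ_ring_protocol x.
split=> [silent | x_const].
- have /eqP e0 : c 0 (x n0) == c 0 (x n1).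
    by move: (silent n1); rewrite EQ1 => /negbFE.
  have /eqP e1 : c 1 (x n1) == c 1 (x n2).
    by move: (silent n2); rewrite EQ2 => /negbFE.
  have /eqP e2 : c 2 (x n2) == c 2 (x n0).
    by move: (silent n0); rewrite EQ0 => /negbFE.
  have [x01 x12] := c_inj _ _ _ (x_range n0) (x_range n1) (x_range n2) e0 e1 e2.
  by move=> i j; case: (node_cases i) => ->; case: (node_cases j) => ->; congruence.
- by move=> i; case: (node_cases i) => ->;
    rewrite ?EQ0 ?EQ1 ?EQ2 ?(x_const n0 n1) ?(x_const n1 n2) ?(x_const n2 n0) eqxx.
Qed.

End RingProtocol.

Definition code (m L j y : nat) : seq bool := bits L (recode 6 3 perm3 j m y.-1).

Lemma code_cycle_injective M m L : M <= 6 ^ m -> 3 ^ m <= 2 ^ L ->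
  cycle_injective [pred y | 0 < y <= M] (code m L).
Proof.
move=> le_M le_3m y0 y1 y2 /= range0 range1 range2.
have code_lt j y : recode 6 3 perm3 j m y < 2 ^ L.
  exact: leq_trans (recode_lt _ perm3_lt _ _ _) le_3m.
move=> /bits_inj e0 /bits_inj e1 /bits_inj e2.
have digits_lt (y : nat) : 0 < y <= M -> y.-1 < 6 ^ m by lia.
have [] := recode_cycle_injective (erefl : 0 < 6) perm3_lt perm3_cycle_injective
  (digits_lt _ range0) (digits_lt _ range1) (digits_lt _ range2)
  (e0 (code_lt _ _) (code_lt _ _)) (e1 (code_lt _ _) (code_lt _ _))
  (e2 (code_lt _ _) (code_lt _ _)); lia.
Qed.

Section BitCount.

Local Open Scope R_scope.

Lemma INR_expn b n : INR (b ^ n)%N = INR b ^ n.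
Proof.
elim: n => [|n IHn]; first by rewrite expn0.
by rewrite expnS -multE mult_INR IHn.
Qed.

Lemma expn_le_of_logb (a b p q : nat) : (0 < a)%N -> (1 < b)%N ->
  INR p * Rlogb (INR b) (INR a) <= INR q -> (a ^ p <= b ^ q)%N.
Proof.
move=> a_gt0 b_gt1 le_pq.
have a_pos : 0 < INR a by apply: lt_0_INR; apply/ltP.
have ln_b_pos : 0 < ln (INR b).
  by rewrite -ln_1; apply: ln_increasing; [lra | apply: lt_1_INR; apply/ltP].
have b_pos : 0 < INR b by apply: lt_0_INR; apply/ltP; lia.
have ln_a : INR p * ln (INR a) = INR p * Rlogb (INR b) (INR a) * ln (INR b).
  by rewrite /Rlogb; field; lra.
apply/leP/INR_le; rewrite !INR_expn; apply: Rnot_lt_le => lt_pow.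
have := ln_increasing _ _ (pow_lt _ q b_pos) lt_pow.
rewrite !ln_pow // ln_a; nra.
Qed.

Lemma ln2_pos : 0 < ln 2.
Proof. by rewrite -ln_1; apply: ln_increasing; lra. Qed.

Lemma ln3_pos : 0 < ln 3.
Proof. by rewrite -ln_1; apply: ln_increasing; lra. Qed.

Lemma log2_3_pos : 0 < Rlogb 2 3.
Proof. exact: Rdiv_lt_0_compat ln3_pos ln2_pos. Qed.

Lemma log2_3_lt : Rlogb 2 3 < 1.585.
Proof.
have lt_pows : 3 ^ 200 < 2 ^ 317 by rewrite !pow_IZR; apply: IZR_lt; vm_compute.
have := ln_increasing _ _ (pow_lt _ 200 (ltac:(lra) : 0 < 3)) lt_pows.
rewrite !ln_pow; try lra.
rewrite !INR_IZR_INZ /= => ln_lt.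
apply: (Rmult_lt_reg_r (ln 2)); first exact: ln2_pos.
by rewrite /Rlogb /Rdiv Rmult_assoc Rinv_l; have := ln2_pos; lra.
Qed.

Lemma log6_2_eq : Rlogb 6 2 = / (1 + Rlogb 2 3).
Proof.
have := ln3_pos; have := ln2_pos; rewrite /Rlogb (_ : 6 = 2 * 3) ?ln_mult; try lra.
by move=> *; field; lra.
Qed.

Lemma log6_2_pos : 0 < Rlogb 6 2.
Proof. by rewrite log6_2_eq; apply: Rinv_0_lt_compat; have := log2_3_pos; lra. Qed.

Lemma Rceil_spec r : r <= IZR (Rceil r) < r + 1.
Proof.
rewrite /Rceil opp_IZR minus_IZR.
by have [] := archimed (- r); lra.
Qed.

Lemma IZR_Rceil_nonneg r : 0 <= r -> IZR (Rceil r) = INR (Z.to_nat (Rceil r)).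
Proof.
move=> r_ge0; have [ge_r _] := Rceil_spec r.
by rewrite INR_IZR_INZ Z2Nat.id //; apply: le_IZR; lra.
Qed.

Definition digit_count (k : nat) : nat := Z.to_nat (Rceil (INR k * Rlogb 6 2)).
Definition word_length (k : nat) : nat :=
  Z.to_nat (Rceil (INR (digit_count k) * Rlogb 2 3)).

Lemma digit_count_spec k :
  INR k * Rlogb 6 2 <= INR (digit_count k) < INR k * Rlogb 6 2 + 1.
Proof.
rewrite /digit_count -IZR_Rceil_nonneg; first exact: Rceil_spec.
by apply: Rmult_le_pos; [exact: pos_INR | exact/Rlt_le/log6_2_pos].
Qed.

Lemma word_length_spec k :
  INR (digit_count k) * Rlogb 2 3 <= INR (word_length k)
  < INR (digit_count k) * Rlogb 2 3 + 1.
Proof.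
rewrite /word_length -IZR_Rceil_nonneg; first exact: Rceil_spec.
by apply: Rmult_le_pos; [exact: pos_INR | exact/Rlt_le/log2_3_pos].
Qed.

Lemma bitcount_eq k : bitcount k = (3 * word_length k)%N.
Proof.
rewrite /bitcount /word_length IZR_Rceil_nonneg //.
by apply: Rmult_le_pos; [exact: pos_INR | exact/Rlt_le/log6_2_pos].
Qed.

Lemma expn2_le_expn6_digit_count k : (2 ^ k <= 6 ^ digit_count k)%N.
Proof.
apply: expn_le_of_logb => //; rewrite (INR_IZR_INZ 6) (INR_IZR_INZ 2) /=.
by have [] := digit_count_spec k.
Qed.

Lemma expn3_le_expn2_word_length k : (3 ^ digit_count k <= 2 ^ word_length k)%N.
Proof.
apply: expn_le_of_logb => //; rewrite (INR_IZR_INZ 3) (INR_IZR_INZ 2) /=.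
by have [] := word_length_spec k.
Qed.

Lemma bitcount_lt k : INR (bitcount k) < 1.840 * INR k + 7.755.
Proof.
have [_ m_lt] := digit_count_spec k; have [_ L_lt] := word_length_spec k.
have d_pos := log2_3_pos; have d_lt := log2_3_lt; have k_ge0 := pos_INR k.
rewrite bitcount_eq -multE mult_INR (INR_IZR_INZ 3) /=.
rewrite log6_2_eq in m_lt.
have frac : Rlogb 2 3 * / (1 + Rlogb 2 3) <= 0.6133.
  apply: (Rmult_le_reg_r (1 + Rlogb 2 3)); first lra.
  by rewrite Rmult_assoc Rinv_l; lra.
have := Rmult_lt_compat_r _ _ _ d_pos m_lt.
have := Rmult_le_compat_l _ _ _ k_ge0 frac.
lra.
Qed.

End BitCount.

Theorem mainTheorem11 :
  forall k : nat, 1 <= k ->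
    (exists P : protocol,
        wf_protocol P /\ solves_MEQ_AD3 (2 ^ k) P /\ plen P = bitcount k)
    /\ Rlt (INR (bitcount k)) (Rplus (Rmult 1.840 (INR k)) 7.755).
Proof.
move=> k _; split; last exact: bitcount_lt.
pose m := digit_count k; pose L := word_length k.
have size_code j y : size (code m L j y) = L by exact: size_bits.
exists (ring_protocol L (code m L)); split; first exact: wf_ring_protocol.
split; last by rewrite plen_ring_protocol bitcount_eq.
apply: solves_ring_protocol size_code _ _.
exact: code_cycle_injective (expn2_le_expn6_digit_count k)
                            (expn3_le_expn2_word_length k).
Qed.
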